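(* Let $K\in\mathbb{R}^{n\times n}$ be symmetric positive semidefinite, labels $y\in\{0,1\}^n$, sample weights $v\in\mathbb{R}^n$, $\lambda\ge0$, and consider kernel binary logistic regression in variables $\alpha\in\mathbb{R}^n$, $b\in\mathbb{R}$: $$\min F(\alpha,b)=-\sum_{i=1}^n v_i\big(y_i\log\hat y_i+(1-y_i)\log(1-\hat y_i)\big)+\lambda\alpha^\top K\alpha,\qquad \hat y=\sigma(K\alpha+b\mathbf{1}_n),$$ with $\sigma(t)=1/(1+e^{-t})$ entrywise. Let $\mathcal{Q}$ be a partition of $\{1,\dots,n\}$ such that (1) $(\mathcal{Q},\mathcal{Q})$ is equitable on $K$; (2) for each $T\in\mathcal{Q}$, $\sum_{i=1}^n v_iK_{ij}y_i$ is the same for all $j\in T$; (3) $v_i$ is constant on each $T\in\mathcal{Q}$. Then for every $b$ and every $\hat\alpha$ constant on each color of $\mathcal{Q}$, $\frac{\partial F}{\partial\alpha_{j_1}}(\hat\alpha,b)=\frac{\partial F}{\partial\alpha_{j_2}}(\hat\alpha,b)$ for all $j_1,j_2$ in the same color; hence $\mathcal{Q}$ together with the singleton $\{b\}$ is a reduction coloring for this problem.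
   Context: A partition of a finite set is a set of nonempty pairwise disjoint subsets (''colors'') covering it. A pair $(\mathcal{P},\mathcal{Q})$ of partitions of the row and column indices of $A$ is equitable on $A$ if for every $S\in\mathcal{P}$, $T\in\mathcal{Q}$: $\sum_{j\in T}A_{ij}$ is the same for all $i\in S$ and $\sum_{i\in S}A_{ij}$ is the same for all $j\in T$. A reduction coloring of an unconstrained differentiable convex program $\min F(x)$ is a partition of the variables such that at every point constant on each color, the partial derivatives of $F$ with respect to variables in a common color coincide. *)

From HB Require Import structures.
From mathcomp Require Import all_boot all_order all_algebra.
From mathcomp Require Import all_classical all_reals all_analysis.
Set Implicit Arguments. Unset Strict Implicit. Unset Printing Implicit Defensive.
Import Order.TTheory GRing.Theory Num.Theory.
Local Open Scope ring_scope.

Section Defs.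
Variable R : realType.

Definition sigmoid (t : R) : R := 1 / (1 + expR (- t)).

Definition equitable (m n : nat) (P : {set {set 'I_m}}) (Q : {set {set 'I_n}})
    (A : 'M[R]_(m, n)) : Prop :=
  finset.partition P [set: 'I_m] /\ finset.partition Q [set: 'I_n] /\
  forall S T, S \in P -> T \in Q ->
    (forall i1 i2, i1 \in S -> i2 \in S ->
        \sum_(j in T) A i1 j = \sum_(j in T) A i2 j) /\
    (forall j1 j2, j1 \in T -> j2 \in T ->
        \sum_(i in S) A i j1 = \sum_(i in S) A i j2).

Definition shift_coord (I : finType) (x : I -> R) (i : I) (t : R) : I -> R :=
  fun k => x k + (if k == i then t else 0).

Definition has_partial (I : finType) (F : (I -> R) -> R) (x : I -> R) (i : I)
    (d : R) : Prop :=
  is_derive (0 : R) (1 : R) (fun t => F (shift_coord x i t)) d.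

Definition const_on_colors (I : finType) (P : {set {set I}}) (x : I -> R) : Prop :=
  forall S, S \in P -> forall i j, i \in S -> j \in S -> x i = x j.

Definition reduction_coloring (I : finType) (F : (I -> R) -> R)
    (P : {set {set I}}) : Prop :=
  finset.partition P [set: I] /\
  forall x, const_on_colors P x ->
    forall S, S \in P -> forall i j, i \in S -> j \in S ->
      exists d, has_partial F x i d /\ has_partial F x j d.

Definition klr_obj (n : nat) (K : 'M[R]_n) (y v : 'I_n -> R) (lam : R)
    (x : option 'I_n -> R) : R :=
  let alpha := fun j => x (Some j) in
  let b := x None in
  let yhat := fun i => sigmoid (\sum_j K i j * alpha j + b) in
  - (\sum_i v i * (y i * ln (yhat i) + (1 - y i) * ln (1 - yhat i)))
  + lam * (\sum_i \sum_j alpha i * K i j * alpha j).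

Definition lift_coloring (n : nat) (Q : {set {set 'I_n}}) :
    {set {set option 'I_n}} :=
  (imset (fun T : {set 'I_n} => imset (@Some 'I_n) (mem T)) (mem Q)) :|: finset.set1 (finset.set1 (@None 'I_n)).

End Defs.

(** With scores z = K alpha + b 1, the partial derivative of the objective in
   alpha_j is  sum_i v_i (sigmoid z_i - y_i) K_ij + lam (sum_i alpha_i K_ij
   + sum_k K_jk alpha_k).  If alpha is constant on the colors of Q, the row
   condition of equitability makes z constant on the colors, hence so is
   v_i sigmoid z_i.  Then every term depends on j only through its color:
   the sigmoid term and sum_i alpha_i K_ij by the column condition, the label
   term by hypothesis (2), and sum_k K_jk alpha_k by the row condition.  The
   intercept is a color on its own, so for it only differentiability is
   needed. *)

From mathcomp Require Import all_boot all_order all_algebra.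
From mathcomp Require Import all_classical all_reals all_analysis.
From mathcomp Require Import ring.
Import Order.TTheory GRing.Theory Num.Theory.
Set Implicit Arguments.
Unset Strict Implicit.
Unset Printing Implicit Defensive.
Local Open Scope ring_scope.

Section Derivatives.
Variable R : realType.

Definition log_likelihood (y u : R) : R :=
  y * ln (sigmoid u) + (1 - y) * ln (1 - sigmoid u).

Lemma one_add_expRN_gt0 (u : R) : 0 < 1 + expR (- u).
Proof. by rewrite addr_gt0 ?expR_gt0. Qed.

Lemma sigmoid_gt0 (u : R) : 0 < sigmoid u.
Proof. by rewrite /sigmoid div1r invr_gt0 one_add_expRN_gt0. Qed.

Lemma ln_sigmoid (u : R) : ln (sigmoid u) = - ln (1 + expR (- u)).
Proof. by rewrite /sigmoid div1r lnV // posrE one_add_expRN_gt0. Qed.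

Lemma one_sub_sigmoid (u : R) : 1 - sigmoid u = expR (- u) * sigmoid u.
Proof.
have nz := lt0r_neq0 (one_add_expRN_gt0 u).
by rewrite /sigmoid; field.
Qed.

Lemma log_likelihoodE (y u : R) :
  log_likelihood y u = ln (sigmoid u) - (1 - y) * u.
Proof.
rewrite /log_likelihood one_sub_sigmoid lnM ?posrE ?expR_gt0 ?sigmoid_gt0 //.
by rewrite expRK; ring.
Qed.

Lemma is_derive_ln_sigmoid (z : R) :
  is_derive z 1 (fun u => ln (sigmoid u)) (1 - sigmoid z).
Proof.
have dexp : is_derive z 1 (fun u => 1 + expR (- u)) (expR (- z) * -1).
  by rewrite -[X in is_derive _ _ _ X]add0r; apply: is_deriveD.
have dln := @is_derive1_comp R (@ln R) (fun u => 1 + expR (- u)) z _ _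
  (is_derive1_ln (one_add_expRN_gt0 z)) dexp.
have -> : (fun u => ln (sigmoid u)) = - ((@ln R) \o (fun u => 1 + expR (- u))).
  by apply/funext => u; rewrite ln_sigmoid.
apply: is_derive_eq (is_deriveN dln) _.
have nz := lt0r_neq0 (one_add_expRN_gt0 z).
by rewrite one_sub_sigmoid /sigmoid; field.
Qed.

Lemma is_derive_log_likelihood (y z : R) :
  is_derive z 1 (log_likelihood y) (y - sigmoid z).
Proof.
have -> : log_likelihood y = (fun u => ln (sigmoid u) - (1 - y) * u).
  by apply/funext => u; rewrite log_likelihoodE.
apply: is_derive_eq (is_deriveB (is_derive_ln_sigmoid z) _) _.
by rewrite /GRing.scale /= mulr1; ring.
Qed.

Lemma is_derive_comp_affine {f : R -> R} {a c df : R} :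
  is_derive a (1 : R) f df -> is_derive 0 (1 : R) (fun t => f (a + t * c)) (df * c).
Proof.
move=> hf; have hf0 : is_derive (a + 0 * c) 1 f df by rewrite mul0r addr0.
have dlin : is_derive 0 (1 : R) (fun t => a + t * c) c.
  by apply: is_derive_eq; rewrite /GRing.scale /=; ring.
exact: (@is_derive1_comp R f (fun t => a + t * c) 0 df c hf0 dlin).
Qed.

Lemma is_derive_add_if (c : R) (b : bool) :
  is_derive 0 (1 : R) (fun t : R => c + (if b then t else 0)) b%:R.
Proof. by case: b; apply: is_derive_eq; rewrite ?add0r ?mulr1. Qed.

Lemma is_derive_sum_fun (n : nat) (h : 'I_n -> R -> R) (a : R) (dh : 'I_n -> R) :
  (forall i, is_derive a (1 : R) (h i) (dh i)) ->
  is_derive a (1 : R) (fun t => \sum_i h i t) (\sum_i dh i).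
Proof. by move=> hd; rewrite -fct_sumE; apply: is_derive_sum. Qed.

Lemma sum_mul_delta {n : nat} (F : 'I_n -> R) (j : 'I_n) :
  \sum_k F k * (k == j)%:R = F j.
Proof.
rewrite (bigD1 j) //= eqxx mulr1 big1 ?addr0 // => k /negbTE ->.
by rewrite mulr0.
Qed.

Lemma is_derive_bilinear_coord (n : nat) (A : 'M[R]_n) (a : 'I_n -> R) (j : 'I_n) :
  is_derive 0 (1 : R)
    (fun t => \sum_i \sum_k (a i + (if i == j then t else 0)) * A i k
                            * (a k + (if k == j then t else 0)))
    (\sum_i a i * A i j + \sum_k A j k * a k).
Proof.
apply: is_derive_eq.
  apply: is_derive_sum_fun => i; apply: is_derive_sum_fun => k.
  apply: is_deriveM; last exact: is_derive_add_if.
  exact: is_deriveM (is_derive_add_if _ _) _.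
rewrite /GRing.scale /=.
transitivity (\sum_i \sum_k (a i * A i k * (k == j)%:R + a k * A i k * (i == j)%:R)).
  apply: eq_bigr => i _; apply: eq_bigr => k _.
  by rewrite !if_same !addr0 mulr0 add0r mulrA.
under [LHS]eq_bigr => i _ do rewrite big_split.
rewrite big_split /=.
congr (_ + _); first by apply: eq_bigr => i _; rewrite sum_mul_delta.
rewrite exchange_big; apply: eq_bigr => k _.
by rewrite (sum_mul_delta (fun i => a k * A i k) j) mulrC.
Qed.

Lemma is_derive_weighted_loss (n : nat) (y v z c : 'I_n -> R) :
  is_derive 0 (1 : R)
    (fun t => - \sum_i v i * log_likelihood (y i) (z i + t * c i))
    (\sum_i v i * (sigmoid (z i) - y i) * c i).
Proof.
apply: is_derive_eq.
  apply: is_deriveN.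
  apply: (@is_derive_sum_fun _ _ _ (fun i => v i * ((y i - sigmoid (z i)) * c i))) => i.
  exact: is_deriveZ (is_derive_comp_affine (is_derive_log_likelihood _ _)).
by rewrite -sumrN; apply: eq_bigr => i _; ring.
Qed.

End Derivatives.

Section ColorSums.
Variables (R : realType) (I : finType) (P : {set {set I}}).
Hypothesis hP : finset.partition P [set: I].

Lemma sum_const_on_colors_mul (w f g : I -> R) : const_on_colors P w ->
  (forall S, S \in P -> \sum_(k in S) f k = \sum_(k in S) g k) ->
  \sum_k w k * f k = \sum_k w k * g k.
Proof.
move=> hw hfg.
have split_colors h : \sum_k w k * h k = \sum_(S in P) \sum_(k in S) w k * h k.
  by rewrite -(set_partition_big _ hP); apply: eq_bigl => k; rewrite finset.in_setT.
rewrite !split_colors; apply: eq_bigr => S PS.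
have [->|[k0 k0S]] := finset.set_0Vmem S; first by rewrite !big_set0.
have factor h : \sum_(k in S) w k * h k = w k0 * \sum_(k in S) h k.
  by rewrite big_distrr; apply: eq_bigr => k kS; rewrite (hw S PS k k0).
by rewrite !factor hfg.
Qed.

End ColorSums.

Section Equitable.
Variables (R : realType) (m n : nat) (P : {set {set 'I_m}}) (Q : {set {set 'I_n}}).
Variable A : 'M[R]_(m, n).
Hypothesis hPQ : equitable P Q A.

Lemma equitable_row_sum (w : 'I_n -> R) : const_on_colors Q w ->
  forall S, S \in P -> forall i1 i2, i1 \in S -> i2 \in S ->
  \sum_k A i1 k * w k = \sum_k A i2 k * w k.
Proof.
case: hPQ => _ [hQ hsum] hw S hS i1 i2 h1 h2.
under eq_bigr do rewrite mulrC; under [RHS]eq_bigr do rewrite mulrC.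
apply: (sum_const_on_colors_mul (f := A i1) (g := A i2) hQ hw) => T hT.
exact: (hsum S T hS hT).1.
Qed.

Lemma equitable_col_sum (w : 'I_m -> R) : const_on_colors P w ->
  forall T, T \in Q -> forall j1 j2, j1 \in T -> j2 \in T ->
  \sum_i w i * A i j1 = \sum_i w i * A i j2.
Proof.
case: hPQ => hP [_ hsum] hw T hT j1 j2 h1 h2.
apply: (sum_const_on_colors_mul (f := A^~ j1) (g := A^~ j2) hP hw) => S hS.
exact: (hsum S T hS hT).2.
Qed.

End Equitable.

Section KernelLogisticRegression.
Variables (R : realType) (n : nat) (K : 'M[R]_n) (y v : 'I_n -> R) (lam : R).
Local Notation F := (klr_obj K y v lam).

Definition klr_score (x : option 'I_n -> R) (i : 'I_n) : R :=
  \sum_j K i j * x (Some j) + x None.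

Definition klr_grad (x : option 'I_n -> R) (j : 'I_n) : R :=
  \sum_i v i * (sigmoid (klr_score x i) - y i) * K i j
  + lam * (\sum_i x (Some i) * K i j + \sum_k K j k * x (Some k)).

Lemma klr_objE x : F x =
  - (\sum_i v i * log_likelihood (y i) (klr_score x i))
  + lam * (\sum_i \sum_j x (Some i) * K i j * x (Some j)).
Proof. by []. Qed.

Lemma klr_score_shift_alpha x j t i :
  klr_score (shift_coord x (Some j) t) i = klr_score x i + t * K i j.
Proof.
rewrite /klr_score /shift_coord /= addr0.
under eq_bigr do rewrite mulrDr.
rewrite big_split /= addrAC; congr (_ + _ + _).
rewrite (bigD1 j) //= eqxx mulrC big1 ?addr0 // => k /negbTE kj.
by rewrite (inj_eq Some_inj) kj mulr0.
Qed.

Lemma klr_score_shift_intercept x t i :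
  klr_score (shift_coord x None t) i = klr_score x i + t * 1.
Proof.
rewrite /klr_score /shift_coord /= mulr1 addrA; congr (_ + _ + _).
by apply: eq_bigr => k _; rewrite addr0.
Qed.

Lemma has_partial_klr_alpha x j : has_partial F x (Some j) (klr_grad x j).
Proof.
rewrite /has_partial; have -> : (fun t => F (shift_coord x (Some j) t)) = fun t =>
    - (\sum_i v i * log_likelihood (y i) (klr_score x i + t * K i j))
    + lam * (\sum_i \sum_k (x (Some i) + (if i == j then t else 0)) * K i k
                        * (x (Some k) + (if k == j then t else 0))).
  apply/funext => t; rewrite klr_objE.
  by under eq_bigr do rewrite klr_score_shift_alpha.
apply: is_deriveD; first exact: is_derive_weighted_loss.
exact: is_deriveZ (is_derive_bilinear_coord K (fun i => x (Some i)) j).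
Qed.

Lemma has_partial_klr_intercept x :
  has_partial F x None (\sum_i v i * (sigmoid (klr_score x i) - y i)).
Proof.
rewrite /has_partial; have -> : (fun t => F (shift_coord x None t)) = fun t =>
    - (\sum_i v i * log_likelihood (y i) (klr_score x i + t * 1))
    + lam * (\sum_i \sum_k x (Some i) * K i k * x (Some k)).
  apply/funext => t; rewrite klr_objE.
  under eq_bigr do rewrite klr_score_shift_intercept.
  by congr (_ + _ * _); apply: eq_bigr => i _; apply: eq_bigr => k _;
    rewrite /shift_coord /= !addr0.
apply: is_derive_eq (is_deriveD (is_derive_weighted_loss _ _ _ _) _) _.
by rewrite addr0; apply: eq_bigr => i _; rewrite mulr1.
Qed.

Variable Q : {set {set 'I_n}}.
Hypothesis hK : equitable Q Q K.
Hypothesis hvKy : forall T, T \in Q -> forall j1 j2, j1 \in T -> j2 \in T ->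
  \sum_i v i * K i j1 * y i = \sum_i v i * K i j2 * y i.
Hypothesis hv : const_on_colors Q v.

Lemma klr_score_const_on_colors x :
  const_on_colors Q (fun j => x (Some j)) -> const_on_colors Q (klr_score x).
Proof.
by move=> hx S hS i1 i2 h1 h2; rewrite /klr_score (equitable_row_sum hK hx hS h1 h2).
Qed.

Lemma klr_grad_const_on_colors x :
  const_on_colors Q (fun j => x (Some j)) -> const_on_colors Q (klr_grad x).
Proof.
move=> hx T hT j1 j2 h1 h2.
have hz := klr_score_const_on_colors hx.
have hw : const_on_colors Q (fun i => v i * sigmoid (klr_score x i)).
  by move=> S hS i1 i2 k1 k2; rewrite (hv hS k1 k2) (hz S hS i1 i2 k1 k2).
have klr_gradE j : klr_grad x j =
    \sum_i v i * sigmoid (klr_score x i) * K i j - \sum_i v i * K i j * y i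
    + lam * (\sum_i x (Some i) * K i j + \sum_k K j k * x (Some k)).
  by rewrite /klr_grad -sumrB; congr (_ + _); apply: eq_bigr => i _; ring.
rewrite !klr_gradE (equitable_col_sum hK hw hT h1 h2) (hvKy hT h1 h2).
by rewrite (equitable_col_sum hK hx hT h1 h2) (equitable_row_sum hK hx hT h1 h2).
Qed.

Lemma klr_alpha_partials_agree x :
  const_on_colors Q (fun j => x (Some j)) ->
  forall T, T \in Q -> forall j1 j2, j1 \in T -> j2 \in T ->
  exists d, has_partial F x (Some j1) d /\ has_partial F x (Some j2) d.
Proof.
move=> hx T hT j1 j2 h1 h2; exists (klr_grad x j1).
rewrite {2}(klr_grad_const_on_colors hx hT h1 h2).
by split; apply: has_partial_klr_alpha.
Qed.

End KernelLogisticRegression.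

Section LiftColoring.
Variables (R : realType) (n : nat) (Q : {set {set 'I_n}}).

Lemma lift_coloring_partition :
  finset.partition Q [set: 'I_n] ->
  finset.partition (lift_coloring Q) [set: option 'I_n].
Proof.
move=> hQ.
have -> : [set: option 'I_n] = [set None] :|: Some @: [set: 'I_n].
  by apply/finset.setP => -[k|]; rewrite !finset.inE ?imset_f ?orbT.
rewrite /lift_coloring finset.setUC; apply: finset.partitionU1.
- by rewrite finset.imset_partition //; exact: Some_inj.
- by apply/finset.set0Pn; exists None; rewrite finset.set11.
- by rewrite finset.disjoints1; apply/imsetP => -[].
Qed.

Lemma const_on_lift_coloring (x : option 'I_n -> R) :
  const_on_colors (lift_coloring Q) x -> const_on_colors Q (fun j => x (Some j)).
Proof.
move=> hx T hT j1 j2 h1 h2; apply: (hx (Some @: T)); rewrite ?imset_f //.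
by apply/finset.setUP; left; rewrite imset_f.
Qed.

End LiftColoring.

Theorem theorem7 (R : realType) (n : nat) (K : 'M[R]_n) (y v : 'I_n -> R)
    (lam : R) (Q : {set {set 'I_n}})
    (hKsym : K^T = K)
    (hKpsd : forall z : 'cV[R]_n, 0 <= (z^T *m K *m z) 0 0)
    (hy : forall i, y i = 0 \/ y i = 1)
    (hlam : 0 <= lam)
    (hQ : finset.partition Q [set: 'I_n])
    (heq : equitable Q Q K)
    (hvKy : forall T, T \in Q -> forall j1 j2, j1 \in T -> j2 \in T ->
        \sum_i v i * K i j1 * y i = \sum_i v i * K i j2 * y i)
    (hv : forall T, T \in Q -> forall i1 i2, i1 \in T -> i2 \in T -> v i1 = v i2) :
  (forall (alpha : 'I_n -> R) (b : R),
     const_on_colors Q alpha ->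
     forall T, T \in Q -> forall j1 j2, j1 \in T -> j2 \in T ->
       let x := fun o : option 'I_n => match o with Some j => alpha j | None => b end in
       exists d, has_partial (klr_obj K y v lam) x (Some j1) d /\
                 has_partial (klr_obj K y v lam) x (Some j2) d)
  /\ reduction_coloring (klr_obj K y v lam) (lift_coloring Q).
Proof.
have agree := klr_alpha_partials_agree lam heq hvKy hv.
split; first by move=> alpha b halpha; exact: agree.
split; first exact: lift_coloring_partition.
move=> x hx S /finset.setUP[/imsetP[T hT ->] | /finset.set1P ->] i j.
- move=> /imsetP[j1 h1 ->] /imsetP[j2 h2 ->].
  exact: agree (const_on_lift_coloring hx) _ hT _ _ h1 h2.
- move=> /finset.set1P -> /finset.set1P ->.
  by eexists; split; apply: has_partial_klr_intercept.
Qed.
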